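(* For every integer $n\ge0$ let $\mathcal Q_n$ be the complex vector space of polynomials $q(\xi_1,\ldots,\xi_n|\eta_1,\ldots,\eta_n)$ that are homogeneous of weighted degree $n$ (the variables $\xi_i,\eta_i$ having weight $i$) such that the polynomials $$Q_{N,M}(X|Z)=q\bigl(S_1(X),\ldots,S_n(X)\,\big|\,S_1(Z),\ldots,S_n(Z)\bigr),\qquad X=(x_1,\ldots,x_N),\ Z=(z_1,\ldots,z_M),$$ where $S_r$ denotes the $r$-th power sum, satisfy for all integers $N,M\ge0$ the chain equation $$Q_{N+2,M+1}(X,x,-x\,|\,Z,ix)=Q_{N,M}(X|Z)$$ identically in all variables. Then $$\sum_{n=0}^\infty q^n\dim\mathcal Q_n=\prod_{k=1}^\infty\frac1{1-q^k}.$$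
   Context: Such polynomials $Q_{N,M}$ are automatically symmetric in $X$ and in $Z$ separately; they parametrize (in the kink sector of the sine-Gordon model) form factors of chiral descendant operators. *)

From HB Require Import structures.
From mathcomp Require Import all_boot all_order all_algebra.
From mathcomp Require Import mpoly.
Set Implicit Arguments. Unset Strict Implicit. Unset Printing Implicit Defensive.
Import Order.TTheory GRing.Theory Num.Theory.
Local Open Scope ring_scope.

(* Variables of q in Q_n: 'X_j for j : 'I_(n + n);
   j = lshift n i  is  xi_(i+1),   j = rshift n i  is  eta_(i+1). *)
Definition var_weight (n : nat) (j : 'I_(n + n)) : nat :=
  match split j with inl i => (i : nat).+1 | inr i => (i : nat).+1 end.

Definition wdeg (n : nat) (m : 'X_{1..n + n}) : nat :=
  (\sum_(j < n + n) var_weight j * m j)%N.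

Definition whomog (R : nzRingType) (n d : nat) (q : {mpoly R[n + n]}) : Prop :=
  forall m, m \in msupp q -> wdeg m = d.

Definition psum (R : nzRingType) (r : nat) (s : seq R) : R := \sum_(a <- s) a ^+ r.

Definition psum_point (R : nzRingType) (n : nat) (X Z : seq R) : 'I_(n + n) -> R :=
  fun j => match split j with
           | inl i => psum (i : nat).+1 X
           | inr i => psum (i : nat).+1 Z end.

Definition QNM (R : comNzRingType) (n : nat) (q : {mpoly R[n + n]}) (X Z : seq R) : R :=
  q.@[@psum_point R n X Z].

(* membership in the space Q_n (over a field C containing i = sqrt(-1));
   X, Z range over all finite tuples, i.e. all N, M >= 0 *)
Definition in_Qn (C : numClosedFieldType) (n : nat) (q : {mpoly C[n + n]}) : Prop :=
  @whomog C n n q /\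
  forall (X Z : seq C) (x : C),
    QNM q (X ++ [:: x; - x]) (Z ++ [:: 'i * x]) = QNM q X Z.

Definition has_dim (C : fieldType) (V : lmodType C) (P : V -> Prop) (d : nat) : Prop :=
  exists b : 'I_d -> V,
    (forall k, P (b k)) /\
    (forall c : 'I_d -> C, \sum_(k < d) c k *: b k = 0 -> forall k, c k = 0) /\
    (forall v, P v -> exists c : 'I_d -> C, v = \sum_(k < d) c k *: b k).

(* coefficient of q^n in prod_{k>=1} 1/(1-q^k); only factors k <= n and
   terms q^(k j) with j <= n can contribute, so this is the exact coefficient *)
Definition gen_coef (n : nat) : int :=
  (\prod_(1 <= k < n.+1) \sum_(j < n.+1) ('X^(k * j) : {poly int}))`_n.

(* The combinations L_r = i^r xi_r - (1 + (-1)^r) eta_r are invariant under the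
   chain move, which adds (1 + (-1)^r) x^r to S_r(X) and i^r x^r to S_r(Z).
   Conversely, power sums of finite lists take arbitrary values and chain moves
   can make all the eta_r vanish, so a polynomial satisfying the chain equations
   is determined by the values of the L_r: it equals p(L_1, ..., L_n) with
   p := q(X_1 / i, ..., X_n / i^n | 0, ..., 0).  Hence q |-> p is an isomorphism
   from Q_n onto the polynomials of weighted degree n in X_1, ..., X_n (X_r of
   weight r), whose monomial basis is indexed by the partitions of n. *)

From HB Require Import structures.
From mathcomp Require Import all_boot all_order all_algebra.
From mathcomp Require Import mpoly.
From mathcomp Require Import cyclic separable cyclotomic ring.
Import Order.TTheory GRing.Theory Num.Theory.
Local Open Scope ring_scope.
Set Implicit Arguments. Unset Strict Implicit. Unset Printing Implicit Defensive.

Lemma psum_cat (R : nzRingType) k (s1 s2 : seq R) :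
  psum k (s1 ++ s2) = psum k s1 + psum k s2.
Proof. by rewrite /psum big_cat. Qed.

Lemma psum_scale (R : comNzRingType) k (c : R) (s : seq R) :
  psum k (map ( *%R c) s) = c ^+ k * psum k s.
Proof. by rewrite /psum big_map mulr_sumr; apply: eq_bigr => x _; rewrite exprMn. Qed.

Definition pm_pairs (R : nzRingType) (s : seq R) : seq R :=
  flatten [seq [:: x; - x] | x <- s].

Lemma psum_pm_pairs (R : comNzRingType) k (s : seq R) :
  psum k (pm_pairs s) = (1 + (-1) ^+ k) * psum k s.
Proof.
elim: s => [|x s IHs]; first by rewrite /psum !big_nil mulr0.
by move: IHs; rewrite /psum /= !big_cons => ->; rewrite (exprNn x); ring.
Qed.

Section PowerSums.
Variable C : numClosedFieldType.

Lemma prim_root_exists N : (N > 0)%N -> exists z : C, N.-primitive_root z.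
Proof.
move=> N_gt0; have [r Dp] := closed_field_poly_normal ('X^N - 1 : {poly C}).
rewrite (monicP _) ?monicXnsubC // scale1r in Dp.
have rN1 : all N.-unity_root r by apply/allP=> z; rewrite -root_prod_XsubC -Dp.
have sz_r : (N < (size r).+1)%N.
  by rewrite -(size_prod_XsubC r id) -Dp size_XnsubC.
have [|z] := hasP (has_prim_root N_gt0 rN1 _ sz_r); last by exists z.
by rewrite -separable_prod_XsubC -Dp separable_Xn_sub_1 // pnatr_eq0 -lt0n.
Qed.

Lemma psum_prim_root_orbit N (z a : C) k : N.-primitive_root z -> (0 < k <= N)%N ->
  psum k [seq a * z ^+ j | j <- iota 0 N] = if k == N then N%:R * a ^+ N else 0.
Proof.
move=> prim_z /andP[k_gt0 le_kN].
rewrite /psum big_map -{1}(subn0 N) -/(index_iota 0 N) big_mkord.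
under eq_bigr do rewrite exprMn -exprM mulnC exprM.
rewrite -mulr_sumr; case: eqP => [-> | /eqP ne_kN].
  under eq_bigr do rewrite (prim_expr_order prim_z) expr1n.
  by rewrite sumr_const card_ord mulr_natr mulr_natl.
have zk_neq1 : z ^+ k != 1.
  rewrite -(prim_order_dvd prim_z); apply/negP => /(dvdn_leq k_gt0).
  by rewrite leqNgt ltn_neqAle ne_kN le_kN.
have : (z ^+ k - 1) * \sum_(j < N) (z ^+ k) ^+ j = 0.
  by rewrite -subrX1 -exprM mulnC exprM (prim_expr_order prim_z) expr1n subrr.
by move/eqP; rewrite mulf_eq0 subr_eq0 (negbTE zk_neq1) => /eqP ->; rewrite mulr0.
Qed.

(* Appending the (N+1)-th roots of a suitable constant adjusts [S_(N+1)] and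
   leaves the lower power sums unchanged. *)
Lemma psum_surjective N (s : nat -> C) :
  exists X : seq C, forall k, (0 < k <= N)%N -> psum k X = s k.
Proof.
elim: N => [|N [X HX]].
  by exists [::] => k; rewrite andbC leqn0 => /andP[/eqP ->].
have [z prim_z] := prim_root_exists (ltn0Sn N).
pose a := N.+1.-root ((s N.+1 - psum N.+1 X) / N.+1%:R).
exists (X ++ [seq a * z ^+ j | j <- iota 0 N.+1]) => k k_range.
rewrite psum_cat psum_prim_root_orbit //; case: eqP => [-> | /eqP ne_kN].
  rewrite rootCK // mulrC divfK ?pnatr_eq0 //; ring.
by rewrite addr0 HX // (andP k_range).1 -ltnS ltn_neqAle ne_kN (andP k_range).2.
Qed.

Lemma psum_surjective_ord N (s : 'I_N -> C) :
  exists X : seq C, forall i : 'I_N, psum i.+1 X = s i.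
Proof.
have [X HX] := psum_surjective N (fun k => if insub k.-1 is Some i then s i else 0).
by exists X => i; rewrite HX ?ltn_ord //= valK.
Qed.

End PowerSums.

Section VanishingPolynomial.
Variable R : numDomainType.

Lemma poly_eq0_horner (p : {poly R}) : (forall t, p.[t] = 0) -> p = 0.
Proof.
move=> p0; apply: (@roots_geq_poly_eq0 _ _ [seq i%:R | i <- iota 0 (size p)]).
- by apply/allP => t _; rewrite /root p0.
- by rewrite map_inj_uniq ?iota_uniq // => i j /eqP; rewrite eqr_nat => /eqP.
- by rewrite size_map size_iota.
Qed.

Section LastVariable.
Variable k : nat.
Implicit Types (p : {mpoly R[k.+1]}) (m : 'X_{1..k.+1}) (y : 'I_k -> R).

Definition mnm_front m : 'X_{1..k} := [multinom m (widen_ord (leqnSn k) i) | i < k].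

Definition rcons_point y (t : R) : 'I_k.+1 -> R :=
  fun i => if insub (val i) is Some j then y j else t.

Definition mpoly_in_last p y : {poly R} :=
  \sum_(m <- msupp p)
     (p@_m * \prod_(i < k) y i ^+ m (widen_ord (leqnSn k) i)) *: 'X^(m ord_max).

Definition mcoef_Xlast p (j : nat) : {mpoly R[k]} :=
  \sum_(m <- msupp p | m ord_max == j) p@_m *: 'X_[mnm_front m].

Lemma mnm_front_inj m1 m2 :
  mnm_front m1 = mnm_front m2 -> m1 ord_max = m2 ord_max -> m1 = m2.
Proof.
move=> eq_front eq_last; apply/mnmP => i; case: (unliftP ord_max i) => [j ->|-> //].
have -> : lift ord_max j = widen_ord (leqnSn k) j.
  by apply: val_inj; rewrite /= /bump leqNgt ltn_ord.
by have := congr1 (fun m : 'X_{1..k} => m j) eq_front; rewrite /mnm_front !mnmE.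
Qed.

Lemma horner_mpoly_in_last p y t : (mpoly_in_last p y).[t] = p.@[rcons_point y t].
Proof.
rewrite mevalE horner_sum; apply: eq_bigr => m _.
rewrite hornerZ hornerXn big_ord_recr /= -mulrA; congr (_ * (_ * _)).
  by apply: eq_bigr => i _; rewrite /rcons_point /= valK.
by rewrite /rcons_point insubF //= ltnn.
Qed.

Lemma coef_mpoly_in_last p y j : (mpoly_in_last p y)`_j = (mcoef_Xlast p j).@[y].
Proof.
rewrite coef_sum raddf_sum /= [RHS]big_mkcond /=; apply: eq_bigr => m _.
rewrite coefZ coefXn eq_sym; case: eqP => [_|_]; last by rewrite mulr0.
by rewrite mulr1 mevalZ mevalX; congr (_ * _); apply: eq_bigr => i _; rewrite mnmE.
Qed.

Lemma mcoeff_mcoef_Xlast p m :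
  m \in msupp p -> (mcoef_Xlast p (m ord_max))@_(mnm_front m) = p@_m.
Proof.
move=> m_p; rewrite /mcoef_Xlast raddf_sum /= big_mkcond /=.
rewrite (bigD1_seq m) ?msupp_uniq //= eqxx mcoeffZ mcoeffX eqxx mulr1.
rewrite big1 ?addr0 // => m' /negbTE ne_m'm.
case: eqP => // eq_last; rewrite mcoeffZ mcoeffX.
case: eqP => [eq_front|]; last by rewrite mulr0.
by rewrite (mnm_front_inj eq_front eq_last) eqxx in ne_m'm.
Qed.

End LastVariable.

Lemma mpoly_eq0_meval k (p : {mpoly R[k]}) : (forall y, p.@[y] = 0) -> p = 0.
Proof.
elim: k p => [|k IH] p p0.
  rewrite (nvar0_mpolyC p); move: (p0 (fun _ => 0)).
  by rewrite {1}(nvar0_mpolyC p) mevalC => ->.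
have in_last0 y : mpoly_in_last p y = 0.
  by apply: poly_eq0_horner => t; rewrite horner_mpoly_in_last p0.
apply/mpolyP => m; rewrite mcoeff0.
have [m_p|/memN_msupp_eq0 //] := boolP (m \in msupp p).
rewrite -(mcoeff_mcoef_Xlast m_p) (IH (mcoef_Xlast p (m ord_max))) ?mcoeff0 // => y.
by rewrite -coef_mpoly_in_last in_last0 coef0.
Qed.

End VanishingPolynomial.

Lemma comp_mpolyA (R : comNzRingType) k l n (p : {mpoly R[k]})
    (lq : k.-tuple {mpoly R[l]}) (lr : l.-tuple {mpoly R[n]}) :
  (p \mPo lq) \mPo lr = p \mPo [tuple tnth lq i \mPo lr | i < k].
Proof.
rewrite [p \mPo lq]comp_mpolyEX [RHS]comp_mpolyEX raddf_sum /=; apply: eq_bigr => m _.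
rewrite comp_mpolyZ !comp_mpolyX rmorph_prod; congr (_ *: _); apply: eq_bigr => i _.
by rewrite rmorphXn tnth_mktuple.
Qed.

Lemma comp_mpoly_dhomog (R : comNzRingType) k l (mf : measure k) (mf' : measure l)
    (lq : k.-tuple {mpoly R[l]}) (p : {mpoly R[k]}) d :
  (forall i, tnth lq i \is (mf U_(i)%MM).-homog for mf') ->
  p \is d.-homog for mf -> p \mPo lq \is d.-homog for mf'.
Proof.
move=> hom_lq /dhomogP hom_p; rewrite comp_mpolyEX big_seq; apply: rpred_sum => m m_p.
rewrite rpredZ // comp_mpolyX -(hom_p m m_p) mfE.
apply: (big_ind2 (fun q e => q \is e.-homog for mf')) => [|q1 e1 q2 e2|i _].
- exact: dhomog1.
- exact: dhomogM.
- by rewrite mulnC; apply: dhomogMn.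
Qed.

Lemma wdeg0 n : wdeg (0%MM : 'X_{1..n + n}) = 0%N.
Proof. by rewrite /wdeg big1 // => j _; rewrite mnm0E muln0. Qed.

Lemma wdegD n : {morph @wdeg n : m1 m2 / (m1 + m2)%MM >-> (m1 + m2)%N}.
Proof.
by move=> m1 m2; rewrite /wdeg -big_split /=; apply: eq_bigr => j _; rewrite mnmDE mulnDr.
Qed.

HB.instance Definition _ n := isMeasure.Build (n + n) (@wdeg n) (@wdeg0 n) (@wdegD n).

Lemma wdegU n (j : 'I_(n + n)) : wdeg U_(j)%MM = var_weight j.
Proof.
rewrite /wdeg (bigD1 j) //= mnm1E eqxx muln1 big1 ?addn0 // => j' /negbTE ne_j'j.
by rewrite mnm1E eq_sym ne_j'j muln0.
Qed.

Lemma whomogP (R : nzRingType) n d (q : {mpoly R[n + n]}) :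
  @whomog R n d q <-> q \is d.-homog for @wdeg n.
Proof. by split => [hom_q|/dhomogP //]; apply/dhomogP. Qed.

Lemma split_lshift m k (i : 'I_m) : split (lshift k i) = inl i.
Proof. exact: (unsplitK (inl _ i)). Qed.

Lemma split_rshift m k (i : 'I_k) : split (rshift m i) = inr i.
Proof. exact: (unsplitK (inr _ i)). Qed.

Section Partitions.
Variable n : nat.
Implicit Types f : {ffun 'I_n -> 'I_n.+1}.

Definition mult_mnm f : 'X_{1..n} := [multinom (f i : nat) | i < n].

(* A partition of [n] is recorded by the multiplicity [f i] of each part [i.+1]. *)
Definition partitions : {pred {ffun 'I_n -> 'I_n.+1}} :=
  [pred f | mnmwgt (mult_mnm f) == n].

Lemma mult_mnm_inj : injective mult_mnm.
Proof.
move=> f g eq_fg; apply/ffunP => i; apply: val_inj.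
by have := congr1 (fun m : 'X_{1..n} => m i) eq_fg; rewrite !mnmE.
Qed.

Lemma mult_mnm_surj m : mnmwgt m = n -> exists2 f, f \in partitions & mult_mnm f = m.
Proof.
move=> wgt_m; have le_mi i : (m i < n.+1)%N.
  rewrite ltnS -{2}wgt_m /mnmwgt (bigD1 i) //=.
  by apply: leq_trans (leq_addr _ _); rewrite leq_pmulr.
have eq_m : mult_mnm [ffun i => inord (m i)] = m.
  by apply/mnmP => i; rewrite mnmE ffunE inordK.
by exists [ffun i => inord (m i)]; rewrite // inE eq_m wgt_m.
Qed.

Lemma dhomog_mnmwgt_partitionE (R : nzRingType) (r : {mpoly R[n]}) :
  r \is n.-homog for mnmwgt ->
  r = \sum_(f in partitions) r@_(mult_mnm f) *: 'X_[mult_mnm f].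
Proof.
move=> /dhomogP hom_r; apply/mpolyP => m; rewrite raddf_sum /=.
under eq_bigr do rewrite mcoeffZ mcoeffX.
have [m_r|m_notr] := boolP (m \in msupp r).
  have [f f_part <-] := mult_mnm_surj (hom_r m m_r).
  rewrite (bigD1 f) //= eqxx mulr1 big1 ?addr0 // => g /andP[_ ne_gf].
  by rewrite (inj_eq mult_mnm_inj) (negbTE ne_gf) mulr0.
rewrite (memN_msupp_eq0 m_notr) big1 // => f _.
by case: eqP => [->|_]; rewrite ?(memN_msupp_eq0 m_notr) ?mul0r ?mulr0.
Qed.

Lemma card_partitions : #|partitions|%:Z = gen_coef n.
Proof.
rewrite /gen_coef big_add1 /= big_mkord bigA_distr_bigA /= coef_sum.
under eq_bigr do rewrite prodrXr coefXn.
rewrite -[Posz #|partitions|]natz -sum1_card natr_sum [LHS]big_mkcond /=.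
apply: eq_bigr => f _; rewrite inE /mnmwgt eq_sym.
under eq_bigr do rewrite mnmE mulnC.
by case: eqP.
Qed.

End Partitions.
Arguments partitions : clear implicits.

Section ChainInvariants.
Variables (C : numClosedFieldType) (n : nat).

Lemma psum_point_lshift (X Z : seq C) (r : 'I_n) :
  psum_point X Z (lshift n r) = psum r.+1 X.
Proof. by rewrite /psum_point split_lshift. Qed.

Lemma psum_point_rshift (X Z : seq C) (r : 'I_n) :
  psum_point X Z (rshift n r) = psum r.+1 Z.
Proof. by rewrite /psum_point split_rshift. Qed.

Definition chain_stable (v : {mpoly C[n + n]}) : Prop :=
  forall X Z x, QNM v (X ++ [:: x; - x]) (Z ++ [:: 'i * x]) = QNM v X Z.

Definition xi_coef (r : 'I_n) : C := 'i ^+ r.+1.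
Definition eta_coef (r : 'I_n) : C := 1 + (-1) ^+ r.+1.

(* A chain move adds [eta_coef r * x ^+ r.+1] to [xi_(r+1)] and
   [xi_coef r * x ^+ r.+1] to [eta_(r+1)], so these combinations are unchanged. *)
Definition chain_inv : n.-tuple {mpoly C[n + n]} :=
  [tuple xi_coef r *: 'X_(lshift n r) - eta_coef r *: 'X_(rshift n r) | r < n].

Definition chain_inv_section : (n + n).-tuple {mpoly C[n]} :=
  [tuple match split j with inl r => (xi_coef r)^-1 *: 'X_r | inr _ => 0 end | j < n + n].

Lemma xi_coef_neq0 r : xi_coef r != 0.
Proof. by rewrite expf_neq0 // neq0Ci. Qed.

Lemma meval_chain_inv r y :
  (tnth chain_inv r).@[y] = xi_coef r * y (lshift n r) - eta_coef r * y (rshift n r).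
Proof. by rewrite tnth_mktuple mevalB !mevalZ !mevalXU. Qed.

Lemma chain_stable_comp (p : {mpoly C[n]}) : chain_stable (p \mPo chain_inv).
Proof.
move=> X Z x; rewrite /QNM !comp_mpoly_meval; apply: meval_eq => r.
rewrite !meval_chain_inv !psum_point_lshift !psum_point_rshift !psum_cat /psum.
by rewrite !big_cons !big_nil exprNn exprMn /xi_coef /eta_coef; ring.
Qed.

Lemma dhomog_chain_inv r : tnth chain_inv r \is (mnmwgt U_(r)%MM).-homog for @wdeg n.
Proof.
by rewrite tnth_mktuple mnmwgt1 rpredB // rpredZ // dhomogX /= wdegU /var_weight
  ?split_lshift ?split_rshift.
Qed.

Lemma dhomog_chain_inv_section j :
  tnth chain_inv_section j \is (wdeg U_(j)%MM).-homog for mnmwgt.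
Proof.
rewrite tnth_mktuple wdegU /var_weight.
by case: (split j) => r; rewrite ?rpred0 // rpredZ // dhomogX /= mnmwgt1.
Qed.

Lemma comp_chain_inv_section (p : {mpoly C[n]}) :
  (p \mPo chain_inv) \mPo chain_inv_section = p.
Proof.
rewrite comp_mpolyA -[RHS]comp_mpoly_id; congr comp_mpoly; apply: eq_from_tnth => r.
rewrite !tnth_mktuple comp_mpolyB !comp_mpolyZ !comp_mpolyXU -!tnth_nth !tnth_mktuple.
by rewrite split_lshift split_rshift scaler0 subr0 scalerA mulfV ?xi_coef_neq0 ?scale1r.
Qed.

Lemma chain_stable_pm_pairs v xs X Z : chain_stable v ->
  QNM v (X ++ pm_pairs xs) (Z ++ map ( *%R 'i) xs) = QNM v X Z.
Proof.
move=> st_v; elim: xs X Z => [|x xs IHxs] X Z /=; first by rewrite !cats0.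
rewrite (_ : pm_pairs (x :: xs) = [:: x; - x] ++ pm_pairs xs) // -(cat1s ('i * x)).
by rewrite !catA IHxs st_v.
Qed.

Lemma psum_point_surjective (y : 'I_(n + n) -> C) :
  exists X Z, psum_point X Z =1 y.
Proof.
have [X HX] := psum_surjective_ord (fun r : 'I_n => y (lshift n r)).
have [Z HZ] := psum_surjective_ord (fun r : 'I_n => y (rshift n r)).
exists X, Z => j; case: (split_ordP j) => r ->.
  by rewrite psum_point_lshift HX.
by rewrite psum_point_rshift HZ.
Qed.

(* Chain moves can make every [eta]-coordinate vanish; what is left of the
   [xi]-coordinates is then dictated by the invariants. *)
Lemma chain_stable_meval v y : chain_stable v ->
  v.@[y] = v.@[fun j => (tnth chain_inv_section j).@[fun r => (tnth chain_inv r).@[y]]].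
Proof.
move=> st_v; have [X [Z XZy]] := psum_point_surjective y.
have [xs Hxs] := psum_surjective_ord (fun r : 'I_n => - y (rshift n r) / xi_coef r).
transitivity (QNM v X Z); first by rewrite /QNM; apply: meval_eq => j; rewrite XZy.
rewrite -(chain_stable_pm_pairs xs X Z st_v) /QNM; apply: meval_eq => j.
have cr_neq0 := xi_coef_neq0.
case: (split_ordP j) => r ->; rewrite tnth_mktuple ?split_lshift ?split_rshift.
  rewrite psum_point_lshift psum_cat psum_pm_pairs Hxs -(psum_point_lshift X Z) XZy.
  by rewrite mevalZ mevalXU meval_chain_inv /eta_coef; field; apply: cr_neq0.
rewrite psum_point_rshift psum_cat psum_scale Hxs -(psum_point_rshift X Z) XZy meval0.
by rewrite -/(xi_coef r); field; apply: cr_neq0.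
Qed.

Lemma chain_stable_factor v : chain_stable v ->
  v = (v \mPo chain_inv_section) \mPo chain_inv.
Proof.
move=> st_v; apply/eqP; rewrite -subr_eq0; apply/eqP; apply: mpoly_eq0_meval => y.
by rewrite mevalB !comp_mpoly_meval -chain_stable_meval // subrr.
Qed.

End ChainInvariants.

Section ChainBasis.
Variables (C : numClosedFieldType) (n : nat).

Definition chain_basis (f : {ffun 'I_n -> 'I_n.+1}) : {mpoly C[n + n]} :=
  'X_[mult_mnm f] \mPo chain_inv C n.

Lemma chain_basis_in_Qn f : f \in partitions n -> in_Qn (chain_basis f).
Proof.
move=> f_part; split; last exact: chain_stable_comp.
apply/whomogP; apply: comp_mpoly_dhomog (@dhomog_chain_inv C n) _.
by rewrite dhomogX; apply: f_part.
Qed.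

Lemma chain_basis_free (c : 'I_#|partitions n| -> C) :
  \sum_(k < #|partitions n|) c k *: chain_basis (enum_val k) = 0 -> forall k, c k = 0.
Proof.
move=> sum0 k.
have : \sum_(k < #|partitions n|) c k *: 'X_[mult_mnm (enum_val k)] = 0.
  rewrite -[LHS]comp_chain_inv_section (raddf_sum (comp_mpoly (chain_inv C n))) /=.
  under eq_bigr do rewrite comp_mpolyZ.
  by rewrite sum0 comp_mpoly0.
move/(congr1 (mcoeff (mult_mnm (enum_val k)))); rewrite mcoeff0 raddf_sum (bigD1 k) //=.
rewrite mcoeffZ mcoeffX eqxx mulr1 big1 ?addr0 // => l ne_lk.
rewrite mcoeffZ mcoeffX (inj_eq (@mult_mnm_inj n)) (inj_eq enum_val_inj).
by rewrite (negbTE ne_lk) mulr0.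
Qed.

Lemma chain_basis_span v : in_Qn v ->
  exists c : 'I_#|partitions n| -> C,
    v = \sum_(k < #|partitions n|) c k *: chain_basis (enum_val k).
Proof.
move=> [/whomogP hom_v st_v]; set r := v \mPo chain_inv_section C n.
have hom_r : r \is n.-homog for mnmwgt.
  exact: comp_mpoly_dhomog (@dhomog_chain_inv_section C n) hom_v.
exists (fun k => r@_(mult_mnm (enum_val k))).
rewrite {1}(chain_stable_factor st_v) -/r {1}(dhomog_mnmwgt_partitionE hom_r).
rewrite big_enum_val /= (raddf_sum (comp_mpoly (chain_inv C n))).
by apply: eq_bigr => k _; apply: comp_mpolyZ.
Qed.

End ChainBasis.

Theorem theorem5 (C : numClosedFieldType) (n : nat) :
  exists d : nat, has_dim (@in_Qn C n) d /\ (d%:Z = gen_coef n).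
Proof.
exists #|partitions n|; split; last exact: card_partitions.
exists (fun k => chain_basis C (enum_val k)); split; [|split].
- by move=> k; apply: chain_basis_in_Qn; exact: enum_valP.
- exact: chain_basis_free.
- exact: chain_basis_span.
Qed.
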